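(* There is $\bar\varepsilon>0$ such that the following holds for all $x_0\in\mathbb R$ and $|\varepsilon|<\bar\varepsilon$. Put $y_0=Y(x_0,\varepsilon)$ and $\delta=\Delta(x_0,\varepsilon)$, and let $$(x_1,y_1)=T_{\varepsilon,\delta}(x_0,y_0).$$ Then $$\Delta(x_1,\varepsilon)=\Delta(x_0,\varepsilon)\qquad\text{and}\qquad Y(x_1,\varepsilon)=y_1.$$
   Context: Fix integers $p$ and $q\ge1$ and put $\mu=2\pi p/q$. Let $f:\mathbb R\to\mathbb R$ be a $2\pi$-periodic real-analytic function. For real parameters $\varepsilon,\delta$ set $g(x)=-\delta-\varepsilon f(x)$ and consider the map $T_{\varepsilon,\delta}(x,y)=(x+y+\mu+g(x),\;y+g(x))$ on $\mathbb R^2$. Define ${}_nR$ and ${}_nS$ by $T^n_{\varepsilon,\delta}(x_0,y_0)=(x_0+n\mu+{}_nR,\;y_0+{}_nS)$. There exist $\bar{\bar\varepsilon},\eta>0$ and real-analytic functions $\Delta(x,\varepsilon)$ and $Y(x,\varepsilon)$, defined for $x\in\mathbb R$ and $|\varepsilon|<\bar{\bar\varepsilon}$ and vanishing at $\varepsilon=0$, such that $(\delta,y)=(\Delta(x,\varepsilon),Y(x,\varepsilon))$ is the unique solution with $|\delta|,|y|<\eta$ of ${}_qR(x,y,\varepsilon,\delta)={}_qS(x,y,\varepsilon,\delta)=0$. *)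

From Stdlib Require Import Reals ZArith.
From Coquelicot Require Import Coquelicot.
Open Scope R_scope.

Definition analytic1_at (f : R -> R) (a : R) : Prop :=
  exists (c : nat -> R) (r : R), 0 < r /\
    forall x, Rabs (x - a) < r ->
      ex_series (fun n => Rabs (c n) * Rabs (x - a) ^ n) /\
      f x = Series (fun n => c n * (x - a) ^ n).

Definition analytic1 (f : R -> R) : Prop := forall a, analytic1_at f a.

Definition analytic2_at (F : R -> R -> R) (a b : R) : Prop :=
  exists (c : nat -> nat -> R) (r : R), 0 < r /\
    forall x e, Rabs (x - a) < r -> Rabs (e - b) < r ->
      (forall i, ex_series (fun j => Rabs (c i j) * Rabs (x - a) ^ i * Rabs (e - b) ^ j)) /\
      ex_series (fun i => Series (fun j => Rabs (c i j) * Rabs (x - a) ^ i * Rabs (e - b) ^ j)) /\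
      F x e = Series (fun i => Series (fun j => c i j * (x - a) ^ i * (e - b) ^ j)).

Definition mu (p : Z) (q : nat) : R := 2 * PI * IZR p / INR q.

Definition gfun (f : R -> R) (eps delta : R) (x : R) : R := - delta - eps * f x.

Definition Tmap (f : R -> R) (p : Z) (q : nat) (eps delta : R) (z : R * R) : R * R :=
  let (x, y) := z in
  (x + y + mu p q + gfun f eps delta x, y + gfun f eps delta x).

Definition Titer (f : R -> R) (p : Z) (q : nat) (eps delta : R) (n : nat) (z : R * R)
  : R * R := Nat.iter n (Tmap f p q eps delta) z.

Definition nR (f : R -> R) (p : Z) (q : nat) (n : nat) (x y eps delta : R) : R :=
  fst (Titer f p q eps delta n (x, y)) - x - INR n * mu p q.

Definition nS (f : R -> R) (p : Z) (q : nat) (n : nat) (x y eps delta : R) : R :=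
  snd (Titer f p q eps delta n (x, y)) - y.

(* If (x0, y0) lies on a q-periodic orbit of T, i.e. T^q(x0, y0) = (x0 + q mu, y0), then,
   since q mu = 2 pi p is a period of f, T commutes with the translation by q mu and
   (x1, y1) = T(x0, y0) lies on such an orbit for the same delta.  Uniqueness identifies
   (delta, y1) with (Delta(x1, eps), Y(x1, eps)) as soon as |y1| < eta.  As
   |y1| <= |Delta| + |Y| + |eps f(x0)|, it suffices that these are O(eps) uniformly in x0:
   analyticity gives this locally, compactness on [0, 2 pi] uniformly there, and the
   2 pi-periodicity of Delta and Y (again a consequence of uniqueness) on the whole line. *)

From Stdlib Require Import Reals ZArith Lra Lia Classical ClassicalEpsilon.
From Coquelicot Require Import Coquelicot.
Open Scope R_scope.

Lemma series_dominated (a b : nat -> R) (k : R) :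
  (forall n, Rabs (a n) <= k * b n) -> ex_series b ->
  ex_series a /\ Rabs (Series a) <= k * Series b.
Proof.
  intros Hab Hb.
  assert (Hkb : ex_series (fun n => k * b n)) by exact (ex_series_scal_l k b Hb).
  assert (Habs : ex_series (fun n => Rabs (a n))).
  { apply (ex_series_le (fun n => Rabs (a n)) (fun n => k * b n)); [|exact Hkb].
    intros n. unfold norm; simpl; unfold abs; simpl. rewrite Rabs_Rabsolu. apply Hab. }
  split; [now apply ex_series_Rabs|].
  eapply Rle_trans; [now apply Series_Rabs|].
  rewrite <- Series_scal_l. apply Series_le; [|exact Hkb].
  intros n; split; [apply Rabs_pos | apply Hab].
Qed.

Lemma double_series_dominated (u b : nat -> nat -> R) (k : R) :
  (forall i j, Rabs (u i j) <= k * b i j) ->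
  (forall i, ex_series (b i)) -> ex_series (fun i => Series (b i)) ->
  (forall i, ex_series (u i)) /\ ex_series (fun i => Series (u i)) /\
  Rabs (Series (fun i => Series (u i))) <= k * Series (fun i => Series (b i)).
Proof.
  intros Hub Hb Hbb.
  assert (Hinner : forall i, ex_series (u i) /\ Rabs (Series (u i)) <= k * Series (b i))
    by (intros i; exact (series_dominated (u i) (b i) k (Hub i) (Hb i))).
  destruct (series_dominated (fun i => Series (u i)) (fun i => Series (b i)) k
    (fun i => proj2 (Hinner i)) Hbb) as [Hex Hle].
  split; [intros i; apply Hinner | split; assumption].
Qed.

Lemma Rabs_monomial2 (c X E : R) (i j : nat) :
  Rabs (c * X ^ i * E ^ j) = Rabs c * Rabs X ^ i * Rabs E ^ j.
Proof. now rewrite !Rabs_mult, !RPow_abs. Qed.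

Lemma Rabs_pow_sub_pow0_le (e s : R) (j : nat) :
  0 < s -> Rabs e <= s -> Rabs (e ^ j - 0 ^ j) <= Rabs e / s * s ^ j.
Proof.
  intros Hs Hes. assert (He := Rabs_pos e). destruct j as [|j].
  - simpl. rewrite Rminus_diag, Rabs_R0. apply Rmult_le_pos; [|lra].
    apply Rdiv_le_0_compat; lra.
  - simpl. rewrite Rmult_0_l, Rminus_0_r, Rabs_mult.
    replace (Rabs e / s * (s * s ^ j)) with (Rabs e * s ^ j) by (field; lra).
    apply Rmult_le_compat_l; [exact He|].
    rewrite <- RPow_abs. apply pow_incr; split; [apply Rabs_pos|exact Hes].
Qed.

Lemma analytic1_at_locally_bounded (f : R -> R) (a : R) :
  analytic1_at f a -> exists s K, 0 < s /\ forall x, Rabs (x - a) < s -> Rabs (f x) <= K.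
Proof.
  intros [c [r [Hr Hf]]].
  set (s := r / 2).
  destruct (Hf (a + s)) as [Hs _].
  { replace (a + s - a) with s by ring. rewrite Rabs_pos_eq; unfold s; lra. }
  replace (Rabs (a + s - a)) with s in Hs
    by (replace (a + s - a) with s by ring; rewrite Rabs_pos_eq; unfold s; lra).
  exists s, (Series (fun n => Rabs (c n) * s ^ n)). split; [unfold s; lra|].
  intros x Hx. destruct (Hf x ltac:(unfold s in Hx; lra)) as [_ ->].
  rewrite <- (Rmult_1_l (Series (fun n => Rabs (c n) * s ^ n))).
  apply (series_dominated _ (fun n => Rabs (c n) * s ^ n)); [|exact Hs].
  intros n. rewrite Rmult_1_l, Rabs_mult, <- RPow_abs.
  apply Rmult_le_compat_l; [apply Rabs_pos|]. apply pow_incr; split; [apply Rabs_pos|lra].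
Qed.

Definition O_eps_near (G : R -> R -> R) (a : R) : Prop :=
  exists s K, 0 < s /\
    forall x e, Rabs (x - a) < s -> Rabs e < s -> Rabs (G x e) <= K * Rabs e.

Definition O_eps_on (G : R -> R -> R) (A : R -> Prop) : Prop :=
  exists s K, 0 < s /\ forall x e, A x -> Rabs e < s -> Rabs (G x e) <= K * Rabs e.

Lemma analytic2_at_O_eps (F : R -> R -> R) (a : R) :
  analytic2_at F a 0 -> (forall x, F x 0 = 0) -> O_eps_near F a.
Proof.
  intros [c [r [Hr HF]]] HF0.
  set (s := r / 2). assert (Hs : 0 < s) by (unfold s; lra).
  set (b := fun i j => Rabs (c i j) * s ^ i * s ^ j).
  destruct (HF (a + s) s) as [Hb [Hbb _]].
  { replace (a + s - a) with s by ring. rewrite Rabs_pos_eq; unfold s; lra. }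
  { rewrite Rminus_0_r, Rabs_pos_eq; unfold s; lra. }
  replace (Rabs (a + s - a)) with s in Hb, Hbb
    by (replace (a + s - a) with s by ring; rewrite Rabs_pos_eq; lra).
  rewrite Rminus_0_r, (Rabs_pos_eq s) in Hb, Hbb by lra.
  exists s, (Series (fun i => Series (b i)) / s). split; [exact Hs|].
  intros x e Hx He.
  set (T := fun e' i j => c i j * (x - a) ^ i * (e' - 0) ^ j).
  (* The expansions at [e] and at [0] converge absolutely, so they may be subtracted termwise. *)
  assert (HT : forall e', Rabs e' < s ->
            (forall i, ex_series (T e' i)) /\ ex_series (fun i => Series (T e' i)) /\
            F x e' = Series (fun i => Series (T e' i))).
  { intros e' He'.
    destruct (HF x e' ltac:(unfold s in Hx; lra) ltac:(rewrite Rminus_0_r; unfold s in He'; lra))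
      as [H1 [H2 H3]].
    destruct (double_series_dominated (T e')
      (fun i j => Rabs (c i j) * Rabs (x - a) ^ i * Rabs (e' - 0) ^ j) 1) as [Hi [Ho _]];
      [intros i j; unfold T; rewrite Rabs_monomial2; lra | exact H1 | exact H2 |].
    auto. }
  destruct (HT e He) as [Te [Tee ->]].
  destruct (HT 0 ltac:(rewrite Rabs_R0; lra)) as [T0 [T00 HF0x]].
  rewrite HF0 in HF0x.
  rewrite <- (Rminus_0_r (Series _)), HF0x, <- Series_minus by assumption.
  rewrite (Series_ext _ (fun i => Series (fun j => T e i j - T 0 i j)))
    by (intros i; now rewrite Series_minus).
  replace (Series (fun i => Series (b i)) / s * Rabs e)
    with (Rabs e / s * Series (fun i => Series (b i))) by (field; lra).
  apply (double_series_dominated (fun i j => T e i j - T 0 i j) b); [|exact Hb|exact Hbb].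
  intros i j. unfold T, b. rewrite !Rminus_0_r, <- Rmult_minus_distr_l, !Rabs_mult, <- RPow_abs.
  replace (Rabs e / s * (Rabs (c i j) * s ^ i * s ^ j))
    with (Rabs (c i j) * s ^ i * (Rabs e / s * s ^ j)) by ring.
  apply Rmult_le_compat; try (apply Rmult_le_pos; [|apply pow_le]; apply Rabs_pos); try apply Rabs_pos.
  - apply Rmult_le_compat_l; [apply Rabs_pos|]. apply pow_incr; split; [apply Rabs_pos|lra].
  - apply Rabs_pow_sub_pow0_le; lra.
Qed.

Lemma O_eps_near_add (G1 G2 : R -> R -> R) (a : R) :
  O_eps_near G1 a -> O_eps_near G2 a -> O_eps_near (fun x e => G1 x e + G2 x e) a.
Proof.
  intros [s1 [K1 [Hs1 H1]]] [s2 [K2 [Hs2 H2]]].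
  exists (Rmin s1 s2), (K1 + K2). split; [now apply Rmin_pos|].
  intros x e Hx He.
  assert (Hm1 := Rmin_l s1 s2). assert (Hm2 := Rmin_r s1 s2).
  specialize (H1 x e ltac:(lra) ltac:(lra)). specialize (H2 x e ltac:(lra) ltac:(lra)).
  eapply Rle_trans; [apply Rabs_triang|]. lra.
Qed.

Lemma O_eps_near_abs (G : R -> R -> R) (a : R) :
  O_eps_near G a -> O_eps_near (fun x e => Rabs (G x e)) a.
Proof.
  intros [s [K [Hs H]]]. exists s, K. split; [exact Hs|].
  intros x e Hx He. rewrite Rabs_Rabsolu. auto.
Qed.

Lemma analytic1_at_O_eps (f : R -> R) (a : R) :
  analytic1_at f a -> O_eps_near (fun x e => e * f x) a.
Proof.
  intros Hf. destruct (analytic1_at_locally_bounded f a Hf) as [s [K [Hs HK]]].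
  exists s, K. split; [exact Hs|].
  intros x e Hx _. rewrite Rabs_mult, Rmult_comm.
  apply Rmult_le_compat_r; [apply Rabs_pos | auto].
Qed.

Lemma O_eps_on_segment (G : R -> R -> R) (a b : R) :
  (forall t, a <= t <= b -> O_eps_near G t) -> O_eps_on G (fun x => a <= x <= b).
Proof.
  intros Hloc.
  assert (Hsel : forall t, {sK : R * R | 0 < fst sK /\ (a <= t <= b ->
            forall x e, Rabs (x - t) < fst sK -> Rabs e < fst sK ->
            Rabs (G x e) <= snd sK * Rabs e)}).
  { intros t. apply constructive_indefinite_description.
    destruct (classic (a <= t <= b)) as [Ht | Ht].
    - destruct (Hloc t Ht) as [s [K [Hs H]]]. exists (s, K). split; [exact Hs|auto].
    - exists (1, 0). simpl. split; [lra | tauto]. }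
  (* Shrinking the radius below [1 / (|K| + 1)] makes a common radius [d] also bound the constants by [1 / d]. *)
  assert (Hpos : forall t, 0 < Rmin (fst (proj1_sig (Hsel t)))
                                  (1 / (Rabs (snd (proj1_sig (Hsel t))) + 1))).
  { intros t. apply Rmin_pos; [apply (proj2_sig (Hsel t))|].
    apply Rdiv_lt_0_compat; [lra|]. pose proof (Rabs_pos (snd (proj1_sig (Hsel t)))). lra. }
  destruct (compactness_value_1d a b (fun t => mkposreal _ (Hpos t))) as [[d Hd] Hcover].
  simpl in Hcover.
  exists d, (1 / d). split; [exact Hd|].
  intros x e Hx He. apply NNPP. intros Hfail. apply (Hcover x Hx).
  intros [t [Ht [Hxt Hdt]]]. apply Hfail.
  destruct (proj2_sig (Hsel t)) as [_ Hbound].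
  set (s := fst (proj1_sig (Hsel t))) in *. set (K := snd (proj1_sig (Hsel t))) in *.
  assert (Hm1 := Rmin_l s (1 / (Rabs K + 1))). assert (Hm2 := Rmin_r s (1 / (Rabs K + 1))).
  assert (HK : K <= 1 / d).
  { assert (HKabs := Rle_abs K).
    apply (Rmult_le_reg_r d); [exact Hd|]. unfold Rdiv; rewrite Rmult_1_l, Rinv_l by lra.
    assert (Hk1 : d * (Rabs K + 1) <= 1).
    { replace 1 with (1 / (Rabs K + 1) * (Rabs K + 1)) at 2
        by (field; pose proof (Rabs_pos K); lra).
      apply Rmult_le_compat_r; [pose proof (Rabs_pos K); lra | lra]. }
    nra. }
  eapply Rle_trans; [apply (Hbound Ht); lra|].
  apply Rmult_le_compat_r; [apply Rabs_pos | exact HK].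
Qed.

Lemma O_eps_on_periodic (G : R -> R -> R) (c r : R) :
  0 < c -> 0 < r ->
  (forall k x e, Rabs e < r -> G (x + c * IZR k) e = G x e) ->
  O_eps_on G (fun x => 0 <= x <= c) -> O_eps_on G (fun _ => True).
Proof.
  intros Hc Hr Hper [s [K [Hs H]]].
  exists (Rmin s r), K. split; [now apply Rmin_pos|].
  intros x e _ He.
  assert (Hm1 := Rmin_l s r). assert (Hm2 := Rmin_r s r).
  set (k := (up (x / c) - 1)%Z).
  destruct (archimed (x / c)) as [Hup1 Hup2].
  assert (Hk : IZR k = IZR (up (x / c)) - 1) by (unfold k; now rewrite minus_IZR).
  assert (Hx : x = x / c * c) by (field; lra).
  replace x with ((x - c * IZR k) + c * IZR k) by ring.
  rewrite Hper by lra. apply H; [|lra]. rewrite Hk. split; nra.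
Qed.

Lemma periodic_INR {A : Type} (f : R -> A) (c : R) :
  (forall x, f (x + c) = f x) -> forall n x, f (x + c * INR n) = f x.
Proof.
  intros Hc n. induction n as [|n IH]; intros x.
  - simpl. now rewrite Rmult_0_r, Rplus_0_r.
  - rewrite S_INR. replace (x + c * (INR n + 1)) with ((x + c * INR n) + c) by ring.
    now rewrite Hc.
Qed.

Lemma periodic_IZR {A : Type} (f : R -> A) (c : R) :
  (forall x, f (x + c) = f x) -> forall k x, f (x + c * IZR k) = f x.
Proof.
  intros Hc k x. destruct (Z_le_gt_dec 0 k) as [Hk | Hk].
  - destruct (IZN k Hk) as [n ->]. rewrite <- INR_IZR_INZ. now apply periodic_INR.
  - destruct (IZN (- k) ltac:(lia)) as [n Hn].
    replace k with (- Z.of_nat n)%Z by lia. rewrite opp_IZR, <- INR_IZR_INZ.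
    rewrite <- (periodic_INR f c Hc n (x + c * - INR n)). f_equal; ring.
Qed.

Lemma INR_mul_mu (p : Z) (q : nat) : (1 <= q)%nat -> INR q * mu p q = 2 * PI * IZR p.
Proof.
  intros Hq. unfold mu. assert (INR q <> 0) by (apply not_0_INR; lia). now field.
Qed.

Section Dynamics.
Variables (f : R -> R) (p : Z) (q : nat) (eps delta : R).

Lemma Tmap_shift (c x y : R) : (forall x, f (x + c) = f x) ->
  Tmap f p q eps delta (x + c, y) =
  (fst (Tmap f p q eps delta (x, y)) + c, snd (Tmap f p q eps delta (x, y))).
Proof. intros Hc. unfold Tmap, gfun; simpl. rewrite Hc. f_equal; ring. Qed.

Lemma Titer_shift (c x y : R) (n : nat) : (forall x, f (x + c) = f x) ->
  Titer f p q eps delta n (x + c, y) =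
  (fst (Titer f p q eps delta n (x, y)) + c, snd (Titer f p q eps delta n (x, y))).
Proof.
  intros Hc. induction n as [|n IH]; [reflexivity|].
  unfold Titer in *; simpl. rewrite IH.
  destruct (Nat.iter n (Tmap f p q eps delta) (x, y)). now apply Tmap_shift.
Qed.

Lemma nR_shift (c x y : R) (n : nat) : (forall x, f (x + c) = f x) ->
  nR f p q n (x + c) y eps delta = nR f p q n x y eps delta.
Proof. intros Hc. unfold nR. rewrite Titer_shift by exact Hc. simpl. ring. Qed.

Lemma nS_shift (c x y : R) (n : nat) : (forall x, f (x + c) = f x) ->
  nS f p q n (x + c) y eps delta = nS f p q n x y eps delta.
Proof. intros Hc. unfold nS. rewrite Titer_shift by exact Hc. simpl. ring. Qed.

Lemma Rabs_snd_Tmap_le (x y : R) :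
  Rabs (snd (Tmap f p q eps delta (x, y))) <= Rabs delta + Rabs y + Rabs (eps * f x).
Proof.
  unfold Tmap, gfun; simpl.
  replace (y + (- delta - eps * f x)) with (- delta + y + - (eps * f x)) by ring.
  eapply Rle_trans; [apply Rabs_triang|]. rewrite Rabs_Ropp.
  apply Rplus_le_compat_r. eapply Rle_trans; [apply Rabs_triang|]. now rewrite Rabs_Ropp.
Qed.

Lemma Titer_Tmap (n : nat) (z : R * R) :
  Titer f p q eps delta n (Tmap f p q eps delta z) = Tmap f p q eps delta (Titer f p q eps delta n z).
Proof. unfold Titer. now rewrite <- Nat.iter_succ_r. Qed.

Lemma periodic_orbit_iff (n : nat) (x y : R) :
  nR f p q n x y eps delta = 0 /\ nS f p q n x y eps delta = 0 <->
  Titer f p q eps delta n (x, y) = (x + INR n * mu p q, y).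
Proof.
  unfold nR, nS. destruct (Titer f p q eps delta n (x, y)) as [u v]; simpl.
  split; [intros [Hu Hv]; f_equal; lra | intros Huv; injection Huv; lra].
Qed.

Lemma periodic_orbit_Tmap (n : nat) (x y : R) :
  (forall x, f (x + INR n * mu p q) = f x) ->
  nR f p q n x y eps delta = 0 -> nS f p q n x y eps delta = 0 ->
  let z1 := Tmap f p q eps delta (x, y) in
  nR f p q n (fst z1) (snd z1) eps delta = 0 /\ nS f p q n (fst z1) (snd z1) eps delta = 0.
Proof.
  intros Hper HR HS z1. apply periodic_orbit_iff.
  assert (Horbit := proj1 (periodic_orbit_iff n x y) (conj HR HS)).
  unfold z1. rewrite <- surjective_pairing, Titer_Tmap, Horbit. now apply Tmap_shift.
Qed.

End Dynamics.

Section Solution.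
Variables (f : R -> R) (p : Z) (q : nat) (epsbb eta : R) (Delta Y : R -> R -> R).
Hypothesis hsol : forall x e, Rabs e < epsbb ->
  Rabs (Delta x e) < eta /\ Rabs (Y x e) < eta /\
  nR f p q q x (Y x e) e (Delta x e) = 0 /\ nS f p q q x (Y x e) e (Delta x e) = 0.
Hypothesis huniq : forall x e d y, Rabs e < epsbb -> Rabs d < eta -> Rabs y < eta ->
  nR f p q q x y e d = 0 -> nS f p q q x y e d = 0 -> d = Delta x e /\ y = Y x e.

Lemma solution_shift (c x e : R) : (forall x, f (x + c) = f x) -> Rabs e < epsbb ->
  Delta (x + c) e = Delta x e /\ Y (x + c) e = Y x e.
Proof.
  intros Hc He. destruct (hsol x e He) as [HD [HY [HR HS]]].
  destruct (huniq (x + c) e (Delta x e) (Y x e) He HD HY) as [<- <-];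
    [now rewrite nR_shift | now rewrite nS_shift | auto].
Qed.

Lemma solution_Tmap (x0 e : R) : (forall x, f (x + INR q * mu p q) = f x) -> Rabs e < epsbb ->
  let z1 := Tmap f p q e (Delta x0 e) (x0, Y x0 e) in
  Rabs (snd z1) < eta -> Delta (fst z1) e = Delta x0 e /\ Y (fst z1) e = snd z1.
Proof.
  intros Hper He z1 Hy1. destruct (hsol x0 e He) as [HD [_ [HR HS]]].
  destruct (periodic_orbit_Tmap f p q e (Delta x0 e) q x0 (Y x0 e) Hper HR HS) as [HR1 HS1].
  destruct (huniq (fst z1) e (Delta x0 e) (snd z1) He HD Hy1 HR1 HS1). auto.
Qed.

End Solution.

Theorem mainTheorem6
  (p : Z) (q : nat) (hq : (1 <= q)%nat)
  (f : R -> R)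
  (hf_per : forall x, f (x + 2 * PI) = f x)
  (hf_an : analytic1 f)
  (epsbb eta : R) (hepsbb : 0 < epsbb) (heta : 0 < eta)
  (Delta Y : R -> R -> R)
  (hD_an : forall x e, Rabs e < epsbb -> analytic2_at Delta x e)
  (hY_an : forall x e, Rabs e < epsbb -> analytic2_at Y x e)
  (hD0 : forall x, Delta x 0 = 0)
  (hY0 : forall x, Y x 0 = 0)
  (hsol : forall x e, Rabs e < epsbb ->
     Rabs (Delta x e) < eta /\ Rabs (Y x e) < eta /\
     nR f p q q x (Y x e) e (Delta x e) = 0 /\
     nS f p q q x (Y x e) e (Delta x e) = 0)
  (huniq : forall x e d y, Rabs e < epsbb -> Rabs d < eta -> Rabs y < eta ->
     nR f p q q x y e d = 0 -> nS f p q q x y e d = 0 ->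
     d = Delta x e /\ y = Y x e) :
  exists epsb : R, 0 < epsb /\ epsb <= epsbb /\
    forall x0 e, Rabs e < epsb ->
      let y0 := Y x0 e in
      let delta := Delta x0 e in
      let z1 := Tmap f p q e delta (x0, y0) in
      Delta (fst z1) e = Delta x0 e /\ Y (fst z1) e = snd z1.
Proof.
  assert (hf_perZ := periodic_IZR f (2 * PI) hf_per).
  (* [|y1| <= H x0 e], and [H = O(eps)] uniformly in [x0]. *)
  set (H := fun x e => Rabs (Delta x e) + Rabs (Y x e) + Rabs (e * f x)).
  assert (H_small : O_eps_on H (fun _ => True)).
  { apply (O_eps_on_periodic H (2 * PI) epsbb); [pose proof PI_RGT_0; lra | exact hepsbb | |].
    - intros k x e He. unfold H. rewrite hf_perZ.
      destruct (solution_shift f p q epsbb eta Delta Y hsol huniq (2 * PI * IZR k) x e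
        (hf_perZ k) He) as [-> ->]. reflexivity.
    - assert (H0 : Rabs 0 < epsbb) by (rewrite Rabs_R0; lra).
      apply O_eps_on_segment. intros t _.
      repeat apply O_eps_near_add; apply O_eps_near_abs;
        auto using analytic2_at_O_eps, analytic1_at_O_eps. }
  destruct H_small as [s [K [Hs HK]]].
  assert (HKpos : 0 < Rabs K + 1) by (pose proof (Rabs_pos K); lra).
  exists (Rmin epsbb (Rmin s (eta / (Rabs K + 1)))).
  split; [repeat apply Rmin_pos; try apply Rdiv_lt_0_compat; lra | split; [apply Rmin_l|]].
  intros x0 e He y0 delta z1.
  assert (Hm1 := Rmin_l epsbb (Rmin s (eta / (Rabs K + 1)))).
  assert (Hm2 := Rmin_r epsbb (Rmin s (eta / (Rabs K + 1)))).
  assert (Hm3 := Rmin_l s (eta / (Rabs K + 1))). assert (Hm4 := Rmin_r s (eta / (Rabs K + 1))).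
  apply solution_Tmap with (epsbb := epsbb) (eta := eta); auto; [|lra|].
  - intros x. rewrite INR_mul_mu by exact hq. apply (hf_perZ p).
  - apply (Rle_lt_trans _ (H x0 e)); [apply Rabs_snd_Tmap_le|].
    eapply Rle_lt_trans; [apply Rle_abs|].
    eapply Rle_lt_trans; [apply (HK x0 e I); lra|].
    apply (Rle_lt_trans _ ((Rabs K + 1) * Rabs e)).
    + apply Rmult_le_compat_r; [apply Rabs_pos | pose proof (Rle_abs K); lra].
    + apply (Rmult_lt_reg_r (/ (Rabs K + 1))); [now apply Rinv_0_lt_compat|].
      replace ((Rabs K + 1) * Rabs e * / (Rabs K + 1)) with (Rabs e) by (field; lra).
      unfold Rdiv in Hm4. lra.
Qed.
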